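(* For any register $\bar q$, projectors $P,Q$ on $\mathcal{H}_{\bar q}$ and program $S$: if $\vdash_{\textsc{Wpc}}[P,Q]_{\bar q}\sqsubseteq S$ or $\vdash_{\textsc{Spc}}[P,Q]_{\bar q}\sqsubseteq S$, then $\models\{P\}S\{Q\}$.
   Context: Setting. $V$ finite set of qubit variables, $\mathcal{H}_W=\bigotimes_{q\in W}\mathcal{H}_q$, $\mathcal{H}_q\cong\mathbb{C}^2$ with basis $\{|0\rangle,|1\rangle\}$; operators on subsystems identified with their extension by identity. Projectors identified with subspaces; $\sqsubseteq$ inclusion; $\wedge,\vee$ meet and join; $P^\perp$ orthocomplement; $I$, $0$ top and bottom. Sasaki implication $P\rightsquigarrow Q=P^\perp\vee(P\wedge Q)$, Sasaki conjunction $P\Cap Q=P\wedge(P^\perp\vee Q)$. $\lceil A\rceil$ support of positive $A$; $E(M)$ eigenspace of $M$ for eigenvalue $1$ ($0$ if none); $\mathrm{tr}_{\bar q}$ partial trace. $\rho\models P$ iff $\lceil\rho\rceil\subseteq P$. Programs $S::=\mathbf{skip}\mid\mathbf{abort}\mid \bar q:=0\mid \bar q \mathrel{*}= U\mid \mathbf{assert}\ P[\bar q]\mid [P,Q]_{\bar q}\mid S_0\oplus_p S_1\mid S_0;S_1\mid \mathbf{if}\ P[\bar q]\ \mathbf{then}\ S_1\ \mathbf{else}\ S_0\ \mathbf{end}\mid \mathbf{while}\ P[\bar q]\ \mathbf{do}\ S\ \mathbf{end}$ with denotations (sets of super-operators): $\{\mathrm{id}\}$, $\{0\}$, $\{\rho\mapsto\sum_i|0\rangle_{\bar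 q}\langle i|\rho|i\rangle_{\bar q}\langle 0|\}$, $\{\rho\mapsto U\rho U^\dagger\}$, $\{\rho\mapsto P\rho P\}$, $\{\mathcal{E}$ completely positive trace-nonincreasing on $\mathcal{H}_{\bar q}:\forall\rho\models P,\mathcal{E}(\rho)\models Q\}$, $\{p\mathcal{E}_0+(1-p)\mathcal{E}_1\}$, $\{\mathcal{E}_1\circ\mathcal{E}_0\}$, $\{\mathcal{E}_1\circ\mathcal{P}+\mathcal{E}_0\circ\mathcal{P}^\perp\}$, $\{\sum_{k\ge0}\mathcal{P}^\perp\circ\mathcal{E}_k\circ\mathcal{P}\circ\cdots\circ\mathcal{E}_1\circ\mathcal{P}\}$ respectively, where $\mathcal{E}_i\in\llbracket S_i\rrbracket$ (resp. $\llbracket S\rrbracket$) are chosen independently, $\mathcal{P}(\rho)=P\rho P$, $\mathcal{P}^\perp(\rho)=P^\perp\rho P^\perp$. $\models\{P\}S\{Q\}$ iff for all partial density operators $\rho$ on $\mathcal{H}_V$ and $\mathcal{E}\in\llbracket S\rrbracket$, $\rho\models P\Rightarrow\mathcal{E}(\rho)\models Q$. $S\sqsubseteq S'$ (refinement) iff for all projectors $P,Q$, $\models\{P\}S\{Q\}\Rightarrow\models\{P\}S'\{Q\}$; $S\equiv S'$ iff both directions. Rules (all schematic in programs, registers, projectors on the relevant register, $p$): Structural: $S\equiv S$; from $S_0\sqsubseteq S_1$ and $S_1\sqsubseteq S_2$ infer $S_0\sqsubseteq S_2$; from $S_0\sqsubseteq T_0$, $S_1\sqsubseteq T_1$ infer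 $S_0;S_1\sqsubseteq T_0;T_1$, $S_0\oplus_pS_1\sqsubseteq T_0\oplus_pT_1$, and $\mathbf{if}\ P[\bar q]\ \mathbf{then}\ S_1\ \mathbf{else}\ S_0\ \mathbf{end}\sqsubseteq\mathbf{if}\ P[\bar q]\ \mathbf{then}\ T_1\ \mathbf{else}\ T_0\ \mathbf{end}$; from $S\sqsubseteq T$ infer $\mathbf{while}\ P[\bar q]\ \mathbf{do}\ S\ \mathbf{end}\sqsubseteq\mathbf{while}\ P[\bar q]\ \mathbf{do}\ T\ \mathbf{end}$. Common: $[0,Q]_{\bar q}\sqsubseteq S$; $[P,I]_{\bar q}\sqsubseteq S$; $[P,Q]_{\bar q}\sqsubseteq\mathbf{abort}$; $[P,P]_{\bar q}\sqsubseteq\mathbf{skip}$; $[P,Q]_{\bar q}\sqsubseteq[R,T]_{\bar q}$ if $P\sqsubseteq R$ and $T\sqsubseteq Q$; $[P,Q]_{\bar q}\sqsubseteq[P,R]_{\bar q};[R,Q]_{\bar q}$. Wpc rules: $[E(\langle0|_{\bar q}Q|0\rangle_{\bar q}),Q]_{\bar q}\sqsubseteq\bar q:=0$; $[U^\dagger_{\bar q}QU_{\bar q},Q]_{\bar q}\sqsubseteq\bar q\mathrel{*}=U$; $[P\rightsquigarrow Q,Q]_{\bar q}\sqsubseteq\mathbf{assert}\ P[\bar q]$; $[P,Q]_{\bar q}\equiv[P_1,Q]_{\bar q}\oplus_p[P_2,Q]_{\bar q}$ if $0<p<1$ and $P=P_1\wedge P_2$; $[(P\rightsquigarrow P_1)\wedge(P^\perp\rightsquigarrow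 P_0),Q]_{\bar q}\equiv\mathbf{if}\ P[\bar q]\ \mathbf{then}\ [P_1,Q]_{\bar q}\ \mathbf{else}\ [P_0,Q]_{\bar q}\ \mathbf{end}$; $[(P\rightsquigarrow Q)\wedge(P^\perp\rightsquigarrow R),R]_{\bar q}\sqsubseteq\mathbf{while}\ P[\bar q]\ \mathbf{do}\ [Q,(P\rightsquigarrow Q)\wedge(P^\perp\rightsquigarrow R)]_{\bar q}\ \mathbf{end}$. Spc rules: $[P,|0\rangle_{\bar q}\langle0|\otimes\lceil\mathrm{tr}_{\bar q}(P)\rceil]_{\bar q}\sqsubseteq\bar q:=0$; $[P,U_{\bar q}PU^\dagger_{\bar q}]_{\bar q}\sqsubseteq\bar q\mathrel{*}=U$; $[P,Q\Cap P]_{\bar q}\sqsubseteq\mathbf{assert}\ Q[\bar q]$; $[P,Q]_{\bar q}\equiv[P,Q_1]_{\bar q}\oplus_p[P,Q_2]_{\bar q}$ if $0<p<1$ and $Q_1\vee Q_2=Q$; $[P,Q]_{\bar q}\sqsubseteq\mathbf{if}\ R[\bar q]\ \mathbf{then}\ [R\Cap P,Q]_{\bar q}\ \mathbf{else}\ [R^\perp\Cap P,Q]_{\bar q}\ \mathbf{end}$; $[Inv,P^\perp\Cap Inv]_{\bar q}\sqsubseteq\mathbf{while}\ P[\bar q]\ \mathbf{do}\ [P\Cap Inv,Inv]_{\bar q}\ \mathbf{end}$. $\vdash_{\textsc{Wpc}}[P,Q]_{\bar q}\sqsubseteq S$ means this relation is derivable from the structural, common and Wpc rules; $\vdash_{\textsc{Spc}}$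 likewise with the Spc rules instead of the Wpc rules (an equivalence $\equiv$ may be used in either direction as $\sqsubseteq$). *)

(* Scalars: C := R[i] (mathcomp-real-closed complex numbers)
   over an arbitrary realType R (for R the reals this is the field of complex
   numbers; completeness of R is needed for the infinite sums in the semantics
   of while loops). *)
From HB Require Import structures.
From mathcomp Require Import all_boot all_order all_algebra.
From mathcomp Require Import reals complex.
From Stdlib Require Import ClassicalEpsilon.

Set Implicit Arguments.
Unset Strict Implicit.
Unset Printing Implicit Defensive.

Import Order.TTheory GRing.Theory Num.Theory.
Local Open Scope ring_scope.
Local Open Scope sesquilinear_scope.

Section QProg.

Variable R : realType.
Local Notation C := (R[i]).

Variable V : finType.

(* Hilbert spaces.  The computational basis of H_W is indexed by the   *)
(* classical assignments of booleans to the qubits of W.              *)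

Definition gst := {ffun V -> bool}.
Definition dV := #|{: gst}|.
Definition lst (k : nat) := {ffun 'I_k -> bool}.
Definition dk (k : nat) := #|{: lst k}|.

Definition gop := 'M[C]_dV.
Definition lop k := 'M[C]_(dk k).

Definition reg (k : nat) := {q : k.-tuple V | uniq q}.

Definition ix0 k : 'I_(dk k) := enum_rank ([ffun => false] : lst k).

Definition loc k (q : k.-tuple V) (s : gst) : lst k := [ffun i => s (tnth q i)].
Definition glue k (q : k.-tuple V) (a : lst k) (s : gst) : gst :=
  [ffun v => if [pick i | tnth q i == v] is Some i then a i else s v].
Definition agree_out k (q : k.-tuple V) (s t : gst) : bool :=
  [forall v, (v \notin q) ==> (s v == t v)].

(* extension A (x) I of an operator on H_q to H_V *)
Definition ext k (q : reg k) (A : lop k) : gop :=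
  \matrix_(i, j) (if agree_out (val q) (enum_val i) (enum_val j)
                 then A (enum_rank (loc (val q) (enum_val i)))
                        (enum_rank (loc (val q) (enum_val j)))
                 else 0).

Definition gso := gop -> gop.
Definition lso k := lop k -> lop k.

(* extension E (x) id of a super-operator on H_q to H_V *)
Definition ext_so k (q : reg k) (E : lso k) : gso := fun rho =>
  \matrix_(i, j)
    E (\matrix_(a, b) rho (enum_rank (glue (val q) (enum_val a) (enum_val i)))
                          (enum_rank (glue (val q) (enum_val b) (enum_val j))))
      (enum_rank (loc (val q) (enum_val i))) (enum_rank (loc (val q) (enum_val j))).

Definition psd n (A : 'M[C]_n) : Prop :=
  forall v : 'cV[C]_n, 0 <= (v ^t* *m A *m v) 0 0.

Definition pdo n (rho : 'M[C]_n) : Prop := psd rho /\ \tr rho <= 1.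

(* Subspaces of C^n are represented (mxalgebra) by row spaces; a column
   vector x is represented by the row x^T.  colsp A is the range of A. *)
Definition colsp m n (A : 'M[C]_(m, n)) : 'M[C]_(n, m) := A^T.

Definition is_proj n (P : 'M[C]_n) : bool := (P *m P == P) && (P ^t* == P).
Definition proj k := {P : lop k | is_proj P}.

Lemma is_proj0 n : is_proj (0 : 'M[C]_n).
Proof.
rewrite /is_proj mul0mx eqxx /=; apply/eqP/matrixP => i j.
by rewrite !mxE conjC0.
Qed.

Definition proj0 k : proj k := exist _ 0 (is_proj0 (dk k)).

Definition proj_of k m (S : 'M[C]_(m, dk k)) : proj k :=
  epsilon (inhabits (proj0 k)) (fun P : proj k => (colsp (val P) == S)%MS).

Definition range k (P : proj k) := colsp (val P).
Definition psub k (P Q : proj k) : bool := (range P <= range Q)%MS.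

Definition supp k (A : lop k) : proj k := proj_of (colsp A).
Definition asproj k (A : lop k) : proj k := proj_of (colsp A).

Definition sat n (rho P : 'M[C]_n) : bool := (colsp rho <= colsp P)%MS.

Definition ptop k : proj k := proj_of (colsp (1%:M : lop k)).
Definition pbot k : proj k := proj_of (colsp (0 : lop k)).
Definition pmeet k (P Q : proj k) : proj k := proj_of (range P :&: range Q)%MS.
Definition pjoin k (P Q : proj k) : proj k := proj_of (range P + range Q)%MS.
Definition pperp k (P : proj k) : proj k := proj_of (colsp (1%:M - val P)).
Definition sasaki_imp k (P Q : proj k) : proj k := pjoin (pperp P) (pmeet P Q).
Definition sasaki_conj k (P Q : proj k) : proj k := pmeet P (pjoin (pperp P) Q).

(* E(M): eigenspace of M for eigenvalue 1 (column eigenvectors M x = x);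
   0 if 1 is not an eigenvalue *)
Definition eig1 k (M : lop k) : proj k := proj_of (eigenspace M^T 1).

(* H_emptyset is one-dimensional (dk 0 = 1).  <0|_q Q |0>_q and tr_q(P)
   for operators on H_q are operators on H_emptyset; an operator X on
   H_emptyset is identified with its extension X (x) I_q = X_00 I. *)
Definition bra0ket0 k (Q : lop k) : lop 0 := (Q (ix0 k) (ix0 k))%:M.
Definition ptrace_all k (P : lop k) : lop 0 := (\tr P)%:M.
Definition ext_empty k (X : lop 0) : lop k := X (ix0 0) (ix0 0) *: 1%:M.
Definition ket0bra0_tensor k (X : lop 0) : lop k :=
  X (ix0 0) (ix0 0) *: delta_mx (ix0 k) (ix0 k).

Definition wp_init k (Q : proj k) : proj k :=
  asproj (ext_empty k (val (eig1 (bra0ket0 (val Q))))).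
Definition sp_init k (P : proj k) : proj k :=
  asproj (ket0bra0_tensor k (val (supp (ptrace_all (val P))))).

Definition unitary k := {U : lop k | U \is unitarymx}.
Definition prob := {p : R | (0 <= p <= 1)}.

Inductive prog : Type :=
| PSkip
| PAbort
| PInit k (q : reg k)
| PUnit k (q : reg k) (U : unitary k)
| PAssert k (q : reg k) (P : proj k)
| PSpec k (q : reg k) (P Q : proj k)
| PChoice (S0 S1 : prog) (p : prob)
| PSeq (S0 S1 : prog)
| PIf k (q : reg k) (P : proj k) (S1 S0 : prog)   (* if P[q] then S1 else S0 *)
| PWhile k (q : reg k) (P : proj k) (S : prog).

Definition so_linear n (E : 'M[C]_n -> 'M[C]_n) : Prop :=
  forall (a : C) A B, E (a *: A + B) = a *: E A + E B.

(* ampliation id_m (x) E acting on C^m (x) C^n *)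
Definition ampl m n (E : 'M[C]_n -> 'M[C]_n)
    (X : 'M[C]_#|{: 'I_m * 'I_n}|) : 'M[C]_#|{: 'I_m * 'I_n}| :=
  \matrix_(i, j)
    E (\matrix_(x, y) X (enum_rank ((enum_val i).1, x))
                        (enum_rank ((enum_val j).1, y)))
      (enum_val i).2 (enum_val j).2.

Definition completely_positive n (E : 'M[C]_n -> 'M[C]_n) : Prop :=
  so_linear E /\ forall m X, psd X -> psd (@ampl m n E X).

Definition trace_nonincreasing n (E : 'M[C]_n -> 'M[C]_n) : Prop :=
  forall rho, psd rho -> \tr (E rho) <= \tr rho.

Definition mx_cvg n (u : nat -> 'M[C]_n) (L : 'M[C]_n) : Prop :=
  forall i j (e : R), 0 < e ->
    exists N, forall m, (N <= m)%N -> `|u m i j - L i j| < e%:C%C.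

(* E_k o P o ... o E_1 o P  (Es k' plays the role of E_{k'+1}) *)
Fixpoint while_pref (Pm : gso) (Es : nat -> gso) (k : nat) : gso :=
  match k with
  | 0 => id
  | k'.+1 => fun rho => Es k' (Pm (while_pref Pm Es k' rho))
  end.

Fixpoint den (S : prog) : gso -> Prop :=
  match S with
  | PSkip => fun F => F = id
  | PAbort => fun F => F = fun _ => 0
  | PInit k q => fun F => F = fun rho =>
      \sum_(i < dk k) ext q (delta_mx (ix0 k) i) *m rho *m ext q (delta_mx i (ix0 k))
  | PUnit k q U => fun F => F = fun rho =>
      ext q (val U) *m rho *m (ext q (val U)) ^t*
  | PAssert k q P => fun F => F = fun rho => ext q (val P) *m rho *m ext q (val P)
  | PSpec k q P Q => fun F => exists E : lso k,
      [/\ completely_positive E, trace_nonincreasing E,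
          (forall rho : lop k, pdo rho -> sat rho (val P) -> sat (E rho) (val Q))
        & F = ext_so q E]
  | PChoice S0 S1 p => fun F => exists E0 E1, [/\ den S0 E0, den S1 E1 &
      F = fun rho => (val p)%:C%C *: E0 rho + (1 - val p)%:C%C *: E1 rho]
  | PSeq S0 S1 => fun F => exists E0 E1, [/\ den S0 E0, den S1 E1 &
      F = fun rho => E1 (E0 rho)]
  | PIf k q P S1 S0 => fun F => exists E1 E0, [/\ den S1 E1, den S0 E0 &
      F = fun rho => E1 (ext q (val P) *m rho *m ext q (val P))
                     + E0 (ext q (val (pperp P)) *m rho *m ext q (val (pperp P)))]
  | PWhile k q P Sb => fun F => exists Es : nat -> gso,
      (forall n, den Sb (Es n)) /\
      forall rho, mx_cvg (fun N => \sum_(n < N)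
          (fun X => ext q (val (pperp P)) *m X *m ext q (val (pperp P)))
          (while_pref (fun X => ext q (val P) *m X *m ext q (val P)) Es n rho))
        (F rho)
  end.

Definition hoare_valid (P : gop) (S : prog) (Q : gop) : Prop :=
  forall (rho : gop) (E : gso), pdo rho -> den S E -> sat rho P -> sat (E rho) Q.

Definition refines (S S' : prog) : Prop :=
  forall P Q : gop, is_proj P -> is_proj Q -> hoare_valid P S Q -> hoare_valid P S' Q.

Inductive logic := Wpc | Spc.

Inductive derives : logic -> prog -> prog -> Prop :=
| d_refl L S : derives L S S
| d_trans L S0 S1 S2 : derives L S0 S1 -> derives L S1 S2 -> derives L S0 S2
| d_seq L S0 S1 T0 T1 : derives L S0 T0 -> derives L S1 T1 ->
    derives L (PSeq S0 S1) (PSeq T0 T1)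
| d_choice L S0 S1 T0 T1 p : derives L S0 T0 -> derives L S1 T1 ->
    derives L (PChoice S0 S1 p) (PChoice T0 T1 p)
| d_if L k (q : reg k) P S0 S1 T0 T1 : derives L S0 T0 -> derives L S1 T1 ->
    derives L (PIf q P S1 S0) (PIf q P T1 T0)
| d_while L k (q : reg k) P S T : derives L S T ->
    derives L (PWhile q P S) (PWhile q P T)
| c_bot L k (q : reg k) Q S : derives L (PSpec q (pbot k) Q) S
| c_top L k (q : reg k) P S : derives L (PSpec q P (ptop k)) S
| c_abort L k (q : reg k) P Q : derives L (PSpec q P Q) PAbort
| c_skip L k (q : reg k) P : derives L (PSpec q P P) PSkip
| c_cons L k (q : reg k) P Q R T : psub P R -> psub T Q ->
    derives L (PSpec q P Q) (PSpec q R T)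
| c_seq L k (q : reg k) P Q R :
    derives L (PSpec q P Q) (PSeq (PSpec q P R) (PSpec q R Q))
| w_init k (q : reg k) Q : derives Wpc (PSpec q (wp_init Q) Q) (PInit q)
| w_unit k (q : reg k) (U : unitary k) Q :
    derives Wpc (PSpec q (asproj ((val U) ^t* *m val Q *m val U)) Q) (PUnit q U)
| w_assert k (q : reg k) P Q :
    derives Wpc (PSpec q (sasaki_imp P Q) Q) (PAssert q P)
| w_choice_l k (q : reg k) P P1 P2 Q (p : prob) : 0 < val p < 1 -> P = pmeet P1 P2 ->
    derives Wpc (PSpec q P Q) (PChoice (PSpec q P1 Q) (PSpec q P2 Q) p)
| w_choice_r k (q : reg k) P P1 P2 Q (p : prob) : 0 < val p < 1 -> P = pmeet P1 P2 ->
    derives Wpc (PChoice (PSpec q P1 Q) (PSpec q P2 Q) p) (PSpec q P Q)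
| w_if_l k (q : reg k) P P1 P0 Q :
    derives Wpc (PSpec q (pmeet (sasaki_imp P P1) (sasaki_imp (pperp P) P0)) Q)
                (PIf q P (PSpec q P1 Q) (PSpec q P0 Q))
| w_if_r k (q : reg k) P P1 P0 Q :
    derives Wpc (PIf q P (PSpec q P1 Q) (PSpec q P0 Q))
                (PSpec q (pmeet (sasaki_imp P P1) (sasaki_imp (pperp P) P0)) Q)
| w_while k (q : reg k) P Q R :
    derives Wpc (PSpec q (pmeet (sasaki_imp P Q) (sasaki_imp (pperp P) R)) R)
      (PWhile q P (PSpec q Q (pmeet (sasaki_imp P Q) (sasaki_imp (pperp P) R))))
| s_init k (q : reg k) P : derives Spc (PSpec q P (sp_init P)) (PInit q)
| s_unit k (q : reg k) (U : unitary k) P :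
    derives Spc (PSpec q P (asproj (val U *m val P *m (val U) ^t*))) (PUnit q U)
| s_assert k (q : reg k) P Q :
    derives Spc (PSpec q P (sasaki_conj Q P)) (PAssert q Q)
| s_choice_l k (q : reg k) P Q Q1 Q2 (p : prob) : 0 < val p < 1 -> pjoin Q1 Q2 = Q ->
    derives Spc (PSpec q P Q) (PChoice (PSpec q P Q1) (PSpec q P Q2) p)
| s_choice_r k (q : reg k) P Q Q1 Q2 (p : prob) : 0 < val p < 1 -> pjoin Q1 Q2 = Q ->
    derives Spc (PChoice (PSpec q P Q1) (PSpec q P Q2) p) (PSpec q P Q)
| s_if k (q : reg k) P Q R :
    derives Spc (PSpec q P Q)
      (PIf q R (PSpec q (sasaki_conj R P) Q) (PSpec q (sasaki_conj (pperp R) P) Q))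
| s_while k (q : reg k) P Inv :
    derives Spc (PSpec q Inv (sasaki_conj (pperp P) Inv))
      (PWhile q P (PSpec q (sasaki_conj P Inv) Inv)).

End QProg.

(* Both calculi only ever rewrite a specification [P,Q]_q into programs that
   carry a proof outline {P} S {Q} whose assertions are projectors on the
   register q: each refinement rule is admissible for outlines, by the Sasaki
   adjunction  (P ⋒ X <= Z  iff  X <= P ~> Z)  and elementary facts about
   |0><i| and unitaries.  An outline is sound for the invariant
   "(X ⊗ I) M (X ⊗ I) = M": the invariant is linear and closed under limits,
   so it survives probabilistic choice, conditionals and the infinite sums
   of loops, while for a specification statement complete positivity and
   polarization extend the hypothesis on density operators to every operator
   supported by X.  A density operator satisfying P ⊗ I meets the invariant,
   and any operator meeting it for Q ⊗ I satisfies Q ⊗ I. *)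

From HB Require Import structures.
From mathcomp Require Import all_boot all_order all_algebra.
From mathcomp Require Import reals complex ring lra.
From Stdlib Require Import ClassicalEpsilon Eqdep_dec PeanoNat.

Set Implicit Arguments.
Unset Strict Implicit.
Unset Printing Implicit Defensive.

Import Order.TTheory GRing.Theory Num.Theory.
Local Open Scope ring_scope.
Local Open Scope sesquilinear_scope.

(** * Projectors and Sasaki operations *)

Section Projectors.
Variable R : realType.
Local Notation C := (R[i]).

Lemma adjmxM m n p (A : 'M[C]_(m, n)) (B : 'M[C]_(n, p)) :
  (A *m B) ^t* = B ^t* *m A ^t*.
Proof. by rewrite trmx_mul map_mxM. Qed.

Lemma sub_colspE n p (P : 'M[C]_n) (A : 'M[C]_(n, p)) :
  P *m P = P -> (colsp A <= colsp P)%MS = (P *m A == A).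
Proof.
rewrite /colsp => PP; apply/idP/eqP => [/submxP[D hD]|<-]; last first.
  by rewrite trmx_mul submxMl.
have -> : A = P *m D^T by rewrite -[A]trmxK hD trmx_mul trmxK.
by rewrite mulmxA PP.
Qed.

Lemma is_projP n (P : 'M[C]_n) :
  reflect (P *m P = P /\ P ^t* = P) (is_proj P).
Proof. by apply: (iffP andP) => [[/eqP ? /eqP ?] | [-> ->]]. Qed.

Lemma is_proj1 n : is_proj (1%:M : 'M[C]_n).
Proof. by apply/is_projP; rewrite mul1mx trmx1 map_mx1. Qed.

Lemma is_projC n (P : 'M[C]_n) : is_proj P -> is_proj (1%:M - P).
Proof.
case/is_projP=> PP Ph; apply/is_projP; split.
  by rewrite mulmxBl mul1mx mulmxBr mulmx1 PP subrr subr0.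
by rewrite linearB /= map_mxB trmx1 map_mx1 Ph.
Qed.

Lemma is_proj_delta n (a : 'I_n) : is_proj (delta_mx a a : 'M[C]_n).
Proof.
apply/is_projP; rewrite mul_delta_mx; split=> //.
by apply/matrixP=> x y; rewrite !mxE conjC_nat andbC.
Qed.

(* Gram-Schmidt gives an orthonormal basis B of S, and B^* B projects onto it. *)
Lemma exists_proj_colsp n m (S : 'M[C]_(m, n)) :
  exists P : 'M[C]_n, is_proj P && (colsp P == S)%MS.
Proof.
set B := schmidt (row_base S).
have BB : B *m B^t* = 1%:M.
  by apply/unitarymxP/schmidt_unitarymx/rank_leq_col.
have eqB : (B :=: S)%MS.
  exact: eqmx_trans (eqmx_schmidt_free (row_base_free S)) (eq_row_base S).
exists (B^t* *m B)^T; apply/andP; split.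
  apply/is_projP; split.
    by rewrite -trmx_mul mulmxA -(mulmxA _ B) BB mulmx1.
  by rewrite -map_trmx adjmxM trmxCK.
rewrite /colsp trmxK; apply/eqmxP/(eqmx_trans _ eqB)/eqmxP/andP; split.
  exact: submxMl.
by rewrite -{1}[B]mul1mx -BB -mulmxA submxMl.
Qed.

Lemma proj_eq_colsp n (P Q : 'M[C]_n) : is_proj P -> is_proj Q ->
  (colsp P == colsp Q)%MS -> P = Q.
Proof.
move=> /is_projP[PP Ph] /is_projP[QQ Qh] /andP[].
rewrite !sub_colspE // => /eqP QP /eqP PQ.
by rewrite -Ph -QP adjmxM Ph Qh PQ.
Qed.

Variable k : nat.
Implicit Types P X Y Z : proj R k.

Lemma projP P : is_proj (val P).
Proof. exact: (svalP P). Qed.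

Lemma proj_idem P : val P *m val P = val P.
Proof. by case/is_projP: (projP P). Qed.

Lemma proj_adj P : (val P) ^t* = val P.
Proof. by case/is_projP: (projP P). Qed.

Lemma range_proj_of m (S : 'M[C]_(m, dk k)) : (range (proj_of S) :=: S)%MS.
Proof.
apply/eqmxP; rewrite /range /proj_of.
apply: (@epsilon_spec _ (inhabits (proj0 R k)) (fun P : proj R k => colsp (val P) == S)%MS).
by have [P /andP[hP hS]] := exists_proj_colsp S; exists (exist _ P hP).
Qed.

Lemma val_proj_of (A : lop R k) : is_proj A -> val (proj_of (colsp A)) = A.
Proof.
by move=> hA; apply: proj_eq_colsp (projP _) hA _; apply/eqmxP/range_proj_of.
Qed.

Lemma val_asproj (A : lop R k) : is_proj A -> val (asproj A) = A.
Proof. exact: val_proj_of. Qed.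

Lemma val_pperp P : val (pperp P) = 1%:M - val P.
Proof. by rewrite val_proj_of // is_projC // projP. Qed.

Lemma val_ptop : val (ptop R k) = 1%:M.
Proof. by rewrite val_proj_of // is_proj1. Qed.

Lemma val_pbot : val (pbot R k) = 0.
Proof. by rewrite val_proj_of // is_proj0. Qed.

Lemma psubP X Y : reflect (val Y *m val X = val X) (psub X Y).
Proof. by rewrite /psub /range sub_colspE ?proj_idem //; apply: eqP. Qed.

Lemma psub_mulr X Y : psub X Y -> val X *m val Y = val X.
Proof. by move/psubP=> h; rewrite -proj_adj -[val Y]proj_adj -adjmxM h. Qed.

End Projectors.

Section Idempotent.
Variables (R : realType) (n : nat) (P : 'M[R[i]]_n).

Lemma split_mulmx_compl m (A : 'M[R[i]]_(m, n)) : A = A *m P^T + A *m (1%:M - P)^T.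
Proof. by rewrite linearB /= trmx1 mulmxBr mulmx1 addrC subrK. Qed.

Hypothesis PP : P *m P = P.

Lemma idem_subK m (A : 'M[R[i]]_(m, n)) : (A <= P^T)%MS -> A *m P^T = A.
Proof. by case/submxP=> D ->; rewrite -mulmxA -trmx_mul PP. Qed.

Lemma idem_subC0 m (A : 'M[R[i]]_(m, n)) : (A <= (1%:M - P)^T)%MS -> A *m P^T = 0.
Proof.
case/submxP=> D ->; rewrite -mulmxA -trmx_mul mulmxBr mulmx1 PP subrr.
by rewrite trmx0 mulmx0.
Qed.

End Idempotent.

Section Sasaki.
Variables (R : realType) (k : nat).
Implicit Types P X Y Z : proj R k.

Lemma range_pmeet X Y : (range (pmeet X Y) :=: range X :&: range Y)%MS.
Proof. exact: range_proj_of. Qed.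

Lemma range_pjoin X Y : (range (pjoin X Y) :=: range X + range Y)%MS.
Proof. exact: range_proj_of. Qed.

Lemma range_pperp P : (range (pperp P) :=: (1%:M - val P)^T)%MS.
Proof. by rewrite /range val_pperp. Qed.

Lemma range_sasaki_conj P X :
  (range (sasaki_conj P X) :=: range P :&: ((1%:M - val P)^T + range X))%MS.
Proof.
apply: eqmx_trans (range_pmeet _ _) (cap_eqmx _ _) => //.
exact: eqmx_trans (range_pjoin _ _) (adds_eqmx (range_pperp _) _).
Qed.

Lemma range_sasaki_imp P Z :
  (range (sasaki_imp P Z) :=: (1%:M - val P)^T + (range P :&: range Z))%MS.
Proof.
exact: eqmx_trans (range_pjoin _ _) (adds_eqmx (range_pperp _) (range_pmeet _ _)).
Qed.

Lemma psub_refl X : psub X X.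
Proof. exact: submx_refl. Qed.

Lemma psub_trans X Y Z : psub X Y -> psub Y Z -> psub X Z.
Proof. exact: submx_trans. Qed.

Lemma psub_pmeet X Y Z : psub X (pmeet Y Z) = psub X Y && psub X Z.
Proof. by rewrite /psub range_pmeet sub_capmx. Qed.

Lemma pjoin_psub X Y Z : psub (pjoin X Y) Z = psub X Z && psub Y Z.
Proof. by rewrite /psub range_pjoin addsmx_sub. Qed.

Lemma ptop_psub Y : psub (ptop R k) Y -> val Y = 1%:M.
Proof. by move/psubP; rewrite val_ptop mulmx1. Qed.

Lemma psub_pbotE X : psub X (pbot R k) = (val X == 0).
Proof. by apply/psubP/eqP; rewrite val_pbot mul0mx => ->. Qed.

Lemma pbot_psub Y : psub (pbot R k) Y.
Proof. by apply/psubP; rewrite val_pbot mulmx0. Qed.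

Lemma colsp_mul_sasaki_conj P X :
  (colsp (val P *m val X) <= range (sasaki_conj P X))%MS.
Proof.
rewrite range_sasaki_conj sub_capmx /colsp trmx_mul submxMl /=.
have -> : (val X)^T *m (val P)^T = - ((val X)^T *m (1%:M - val P)^T) + (val X)^T.
  by rewrite [M in _ = _ + M](split_mulmx_compl (val P)) addrCA addNr addr0.
by apply: addmx_sub_adds; [rewrite eqmx_opp submxMl | exact: submx_refl].
Qed.

Lemma sasaki_adjunction P X Z :
  psub (sasaki_conj P X) Z = psub X (sasaki_imp P Z).
Proof.
have PP := proj_idem P.
rewrite /psub range_sasaki_imp; apply/idP/idP => [hc|hX].
  rewrite {1}/range /colsp {1}(split_mulmx_compl (val P) (val X)^T) addrC.
  apply: addmx_sub_adds; first exact: submxMl.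
  rewrite sub_capmx submxMl /=; apply: submx_trans hc.
  by have := colsp_mul_sasaki_conj P X; rewrite /colsp trmx_mul.
rewrite range_sasaki_conj; set A := (range P :&: _)%MS.
have AP : (A <= range P)%MS by exact: capmxSl.
have : (A <= (1%:M - val P)^T + (range P :&: range Z))%MS.
  have /sub_addsmxP[u ->] : (A <= (1%:M - val P)^T + range X)%MS by exact: capmxSr.
  apply: addmx_sub; first exact: submx_trans (submxMl _ _) (addsmxSl _ _).
  exact: submx_trans (submxMl _ _) hX.
case/sub_addsmxP=> u hu; rewrite -(idem_subK PP AP) hu mulmxDl.
rewrite (idem_subC0 PP) ?submxMl // add0r (idem_subK PP); last first.
  exact: submx_trans (submxMl _ _) (capmxSl _ _).
exact: submx_trans (submxMl _ _) (capmxSr _ _).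
Qed.

Lemma sasaki_conjS P X Y : psub X Y -> psub (sasaki_conj P X) (sasaki_conj P Y).
Proof.
rewrite /psub !range_sasaki_conj => hXY.
by rewrite capmxS ?addsmxS ?submx_refl.
Qed.

Lemma sasaki_conj_fixed P X Y : psub (sasaki_conj P X) Y ->
  val Y *m (val P *m val X) = val P *m val X.
Proof.
move=> h; apply/eqP; rewrite -sub_colspE ?proj_idem //.
exact: submx_trans (colsp_mul_sasaki_conj P X) h.
Qed.

Lemma sasaki_conj_pbot P X : psub (sasaki_conj P X) (pbot R k) ->
  psub (sasaki_conj (pperp P) X) (pbot R k) -> val X = 0.
Proof.
move=> /sasaki_conj_fixed + /sasaki_conj_fixed.
rewrite val_pperp !val_pbot !mul0mx => PX PcX.
by rewrite -[val X]mul1mx -(subrK (val P) 1%:M) mulmxDl -PX -PcX addr0.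
Qed.

End Sasaki.

(** * Registers and blocks of operators *)

Section Register.
Variables (V : finType) (k : nat) (q : reg V k).
Local Notation t := (val q).

Lemma glue_out (a : lst k) (s : gst V) v : v \notin t -> glue t a s v = s v.
Proof.
move=> vt; rewrite /glue ffunE; case: pickP => // i /eqP ei.
by move: vt; rewrite -ei mem_tnth.
Qed.

Lemma loc_glue a s : loc t (glue t a s) = a.
Proof.
apply/ffunP=> i; rewrite /loc /glue !ffunE; case: pickP => [j /eqP|/(_ i)].
  by move/(tuple_uniqP _ (valP q)) => ->.
by rewrite eqxx.
Qed.

Lemma glue_loc s : glue t (loc t s) s = s.
Proof.
apply/ffunP=> v; rewrite /loc /glue !ffunE; case: pickP => // i /eqP <-.
by rewrite ffunE.
Qed.

Lemma glue_glue a b s : glue t a (glue t b s) = glue t a s.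
Proof.
by apply/ffunP=> v; rewrite /glue !ffunE; case: pickP => // i; rewrite ffunE => ->.
Qed.

Lemma agree_out_refl s : agree_out t s s.
Proof. by apply/forallP=> v; rewrite eqxx implybT. Qed.

Lemma agree_outC s u : agree_out t s u = agree_out t u s.
Proof. by apply: eq_forallb => v; rewrite eq_sym. Qed.

Lemma agree_out_glue a b s u : agree_out t (glue t a s) (glue t b u) = agree_out t s u.
Proof.
apply: eq_forallb => v; case vt: (v \in t) => //=.
by rewrite !glue_out ?vt.
Qed.

Lemma agree_out_glue_r a s : agree_out t s (glue t a s).
Proof. by apply/forallP=> v; apply/implyP=> vt; rewrite glue_out. Qed.

Lemma glue_agree_out a s u : agree_out t s u -> glue t a s = glue t a u.
Proof.
move=> /forallP agr; apply/ffunP=> v; rewrite /glue !ffunE; case: pickP => // nv.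
have vt : v \notin t by apply/tnthP=> -[i ei]; have := nv i; rewrite ei eqxx.
exact/eqP/(implyP (agr v)).
Qed.

Lemma agree_out_loc_inj s u : agree_out t s u -> loc t s = loc t u -> s = u.
Proof.
by move=> agr eq_loc; rewrite -[s]glue_loc eq_loc (glue_agree_out _ agr) glue_loc.
Qed.

End Register.

Section Blocks.
Variables (R : realType) (V : finType) (k : nat) (q : reg V k).
Local Notation t := (val q).

(* The (s, u) block of a global operator: its restriction to the basis states
   that agree with s, resp. u, outside the register. *)
Definition blk (s u : gst V) (M : gop R V) : lop R k :=
  \matrix_(a, b) M (enum_rank (glue t (enum_val a) s))
                   (enum_rank (glue t (enum_val b) u)).

Lemma blk_inj (M N : gop R V) : (forall s u, blk s u M = blk s u N) -> M = N.
Proof.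
move=> eq_blk; apply/matrixP => i j.
have := congr1 (fun X : lop R k => X (enum_rank (loc t (enum_val i)))
                                      (enum_rank (loc t (enum_val j))))
               (eq_blk (enum_val i) (enum_val j)).
by rewrite /= !mxE !enum_rankK !glue_loc !enum_valK.
Qed.

Lemma blk0 s u : blk s u 0 = 0.
Proof. by apply/matrixP => a b; rewrite !mxE. Qed.

Lemma blk_adj s u M : blk s u (M ^t*) = (blk u s M) ^t*.
Proof. by apply/matrixP => a b; rewrite !mxE. Qed.

Lemma blk_ext s u (A : lop R k) :
  blk s u (ext q A) = if agree_out t s u then A else 0.
Proof.
apply/matrixP => a b; rewrite !mxE !enum_rankK agree_out_glue !loc_glue !enum_valK.
by case: ifP => //; rewrite mxE.
Qed.

Lemma blk_ext_so s u (E : lso R k) M : blk s u (ext_so q E M) = E (blk s u M).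
Proof.
apply/matrixP => a b; rewrite !mxE !enum_rankK !loc_glue !enum_valK.
by congr (E _ _ _); apply/matrixP => c d; rewrite !mxE !glue_glue.
Qed.

Lemma sum_agree_out (s : gst V) (F : 'I_(dV V) -> R[i]) :
  \sum_(l | agree_out t s (enum_val l)) F l =
  \sum_(c : 'I_(dk k)) F (enum_rank (glue t (enum_val c) s)).
Proof.
rewrite (reindex_onto (fun c : 'I_(dk k) => enum_rank (glue t (enum_val c) s))
                      (fun l => enum_rank (loc t (enum_val l)))) /=.
  by apply: eq_bigl => c; rewrite enum_rankK agree_out_glue_r loc_glue enum_valK eqxx.
by move=> l agr; rewrite enum_rankK (glue_agree_out _ agr) glue_loc enum_valK.
Qed.

Lemma blk_ext_mul s u (A : lop R k) M : blk s u (ext q A *m M) = A *m blk s u M.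
Proof.
apply/matrixP => a b; rewrite !mxE.
rewrite (eq_bigr (fun l => if agree_out t (glue t (enum_val a) s) (enum_val l)
    then A a (enum_rank (loc t (enum_val l))) * M l (enum_rank (glue t (enum_val b) u))
    else 0)); last first.
  by move=> l _; rewrite !mxE enum_rankK loc_glue enum_valK; case: ifP; rewrite ?mul0r.
rewrite -big_mkcond sum_agree_out; apply: eq_bigr => c _.
by rewrite enum_rankK loc_glue enum_valK glue_glue !mxE.
Qed.

Lemma blk_mul_ext s u (B : lop R k) M : blk s u (M *m ext q B) = blk s u M *m B.
Proof.
apply/matrixP => a b; rewrite !mxE.
rewrite (eq_bigr (fun l => if agree_out t (glue t (enum_val b) u) (enum_val l)
    then M (enum_rank (glue t (enum_val a) s)) l * B (enum_rank (loc t (enum_val l))) b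
    else 0)); last first.
  move=> l _; rewrite !mxE enum_rankK loc_glue enum_valK agree_outC.
  by case: ifP; rewrite ?mulr0.
rewrite -big_mkcond sum_agree_out; apply: eq_bigr => c _.
by rewrite enum_rankK loc_glue enum_valK glue_glue !mxE.
Qed.

Lemma blk_sandwich s u (A B : lop R k) M :
  blk s u (ext q A *m M *m ext q B) = A *m blk s u M *m B.
Proof. by rewrite blk_mul_ext blk_ext_mul. Qed.

Lemma ext0 : ext q (0 : lop R k) = 0.
Proof. by apply/matrixP=> i j; rewrite !mxE; case: ifP. Qed.

Lemma ext1 : ext q (1%:M : lop R k) = 1%:M.
Proof.
apply/matrixP=> i j; rewrite !mxE; case: ifP => [agr|].
  rewrite (inj_eq enum_rank_inj).
  suff -> : (loc (val q) (enum_val i) == loc (val q) (enum_val j)) = (i == j) by [].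
  apply/eqP/eqP => [eq_loc|-> //].
  exact/enum_val_inj/(agree_out_loc_inj agr).
by case: eqP => // ->; rewrite agree_out_refl.
Qed.

Lemma ext_mul (A B : lop R k) : ext q A *m ext q B = ext q (A *m B).
Proof.
apply: blk_inj => s u; rewrite blk_ext_mul !blk_ext.
by case: ifP; rewrite ?mulmx0.
Qed.

Lemma ext_adj (A : lop R k) : (ext q A) ^t* = ext q (A ^t*).
Proof.
apply: blk_inj => s u; rewrite blk_adj !blk_ext agree_outC.
by case: ifP => // _; apply/matrixP=> a b; rewrite !mxE conjC0.
Qed.

Lemma is_proj_ext (A : lop R k) : is_proj A -> is_proj (ext q A).
Proof. by case/is_projP=> AA Ah; apply/is_projP; rewrite ext_mul ext_adj AA Ah. Qed.

End Blocks.

(** * Entrywise convergence *)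

Section Convergence.
Variable R : realType.
Local Notation C := (R[i]).
Local Notation Re := complex.Re.

Definition cvgC (x : nat -> C) (l : C) := forall e : R, 0 < e ->
  exists N, forall m, (N <= m)%N -> `|x m - l| < e%:C%C.

Lemma normC_Re (z : C) : `|z| = (Re `|z|)%:C%C.
Proof. by rewrite RRe_real // normr_real. Qed.

Lemma Re_normC_ge0 (z : C) : 0 <= Re `|z|.
Proof. by rewrite -ler0c -normC_Re. Qed.

Lemma normC_small_eq0 (z : C) : (forall e : R, 0 < e -> `|z| < e%:C%C) -> z = 0.
Proof.
move=> small; apply/eqP/normr0P; rewrite normC_Re.
have [->//|/negbTE d_neq0] := eqVneq (Re `|z|) 0.
have d_gt0 : 0 < Re `|z| by rewrite lt0r d_neq0 Re_normC_ge0.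
have := small (Re `|z| / 2) (divr_gt0 d_gt0 (ltr0Sn _ 1)).
by rewrite [in X in X < _]normC_Re ltcR => ?; exfalso; lra.
Qed.

Lemma eq_cvgC x y l : x =1 y -> cvgC x l -> cvgC y l.
Proof. by move=> eq_xy cvg_x e /cvg_x[N hN]; exists N => m /hN; rewrite eq_xy. Qed.

Lemma cvgC_const c : cvgC (fun=> c) c.
Proof. by move=> e e_gt0; exists 0%N => m _; rewrite subrr normr0 ltcR. Qed.

Lemma cvgC_uniq x l l' : cvgC x l -> cvgC x l' -> l = l'.
Proof.
move=> cvg_l cvg_l'; apply/eqP; rewrite -subr_eq0; apply/eqP/normC_small_eq0.
move=> e e_gt0; have e2_gt0 : 0 < e / 2 by rewrite divr_gt0.
have [N hN] := cvg_l _ e2_gt0; have [N' hN'] := cvg_l' _ e2_gt0.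
set m := maxn N N'; rewrite (splitr e) rmorphD.
apply: le_lt_trans (ltrD (hN' m (leq_maxr _ _)) (hN m (leq_maxl _ _))).
have -> : l - l' = (x m - l') - (x m - l) by ring.
exact: ler_normB.
Qed.

Lemma cvgCD x y l l' : cvgC x l -> cvgC y l' -> cvgC (fun m => x m + y m) (l + l').
Proof.
move=> cvg_x cvg_y e e_gt0; have e2_gt0 : 0 < e / 2 by rewrite divr_gt0.
have [N hN] := cvg_x _ e2_gt0; have [N' hN'] := cvg_y _ e2_gt0.
exists (maxn N N') => m; rewrite geq_max => /andP[/hN lt_x /hN' lt_y].
rewrite opprD addrACA (splitr e) rmorphD; apply: le_lt_trans (ltrD lt_x lt_y).
exact: ler_normD.
Qed.

Lemma cvgCMl c x l : cvgC x l -> cvgC (fun m => c * x m) (c * l).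
Proof.
move=> cvg_x e e_gt0; set nc := Re `|c|.
have nc1_gt0 : 0 < nc + 1 by rewrite ltr_wpDl ?Re_normC_ge0.
have [N hN] := cvg_x _ (divr_gt0 e_gt0 nc1_gt0).
exists N => m /hN lt_x; rewrite -mulrBr normrM (normC_Re c) -/nc.
apply: le_lt_trans (ler_wpM2l _ (ltW lt_x)) _; first by rewrite ler0c Re_normC_ge0.
rewrite -rmorphM ltcR mulrA ltr_pdivrMr // mulrDr mulr1 mulrC ltrDl //.
Qed.

Lemma cvgCMr c x l : cvgC x l -> cvgC (fun m => x m * c) (l * c).
Proof.
by move=> /(cvgCMl c); rewrite mulrC; apply: eq_cvgC => m; rewrite mulrC.
Qed.

Lemma cvgC_sum I (r : seq I) (F : I -> nat -> C) (L : I -> C) :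
  (forall i, cvgC (F i) (L i)) ->
  cvgC (fun m => \sum_(i <- r) F i m) (\sum_(i <- r) L i).
Proof.
move=> cvgF; elim: r => [|a r IHr].
  by rewrite big_nil; apply: eq_cvgC (cvgC_const 0) => m; rewrite big_nil.
rewrite big_cons; apply: eq_cvgC (cvgCD (cvgF a) IHr) => m.
by rewrite big_cons.
Qed.

Variable n : nat.
Implicit Types u : nat -> 'M[C]_n.

Lemma mx_cvg_uniq u L L' : mx_cvg u L -> mx_cvg u L' -> L = L'.
Proof.
by move=> cvg_L cvg_L'; apply/matrixP=> i j; exact: cvgC_uniq (cvg_L i j) (cvg_L' i j).
Qed.

Lemma mx_cvg_const (M : 'M[C]_n) : mx_cvg (fun=> M) M.
Proof. by move=> i j; exact: cvgC_const. Qed.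

Lemma eq_mx_cvg u v L : u =1 v -> mx_cvg u L -> mx_cvg v L.
Proof. by move=> eq_uv cvg_u i j; apply: eq_cvgC (cvg_u i j) => m; rewrite eq_uv. Qed.

Lemma mx_cvg_sandwich u L (A B : 'M[C]_n) :
  mx_cvg u L -> mx_cvg (fun m => A *m u m *m B) (A *m L *m B).
Proof.
move=> cvg_u i j; rewrite mxE.
under eq_bigr do rewrite mxE.
have cvg_entry := cvgC_sum (index_enum _)
  (fun b => cvgCMr (B b j) (cvgC_sum (index_enum _) (fun a => cvgCMl (A i a) (cvg_u a b)))).
apply: eq_cvgC cvg_entry => m.
by rewrite mxE; apply: eq_bigr => b _; rewrite mxE.
Qed.

End Convergence.

(** * The sandwich invariant and positivity *)

Section Fixes.
Variables (R : realType) (n : nat).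
Local Notation C := (R[i]).
Implicit Types A K M X Y : 'M[C]_n.

Definition fixes A M := A *m M *m A = M.

Lemma fixes0 A : fixes A 0.
Proof. by rewrite /fixes mulmx0 mul0mx. Qed.

Lemma fixesD A M N : fixes A M -> fixes A N -> fixes A (M + N).
Proof. by rewrite /fixes mulmxDr mulmxDl => -> ->. Qed.

Lemma fixesZ A c M : fixes A M -> fixes A (c *: M).
Proof. by rewrite /fixes -scalemxAr -scalemxAl => ->. Qed.

Lemma fixes_sum A I (r : seq I) (F : I -> 'M[C]_n) :
  (forall i, fixes A (F i)) -> fixes A (\sum_(i <- r) F i).
Proof. by move=> fixF; elim/big_rec: _ => [|i M _]; [exact: fixes0 | exact: fixesD]. Qed.

Lemma fixes_lim A (u : nat -> 'M[C]_n) L :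
  mx_cvg u L -> (forall m, fixes A (u m)) -> fixes A L.
Proof.
move=> cvg_u fix_u; apply: mx_cvg_uniq (mx_cvg_sandwich A A cvg_u) _.
by apply: eq_mx_cvg cvg_u => m; rewrite fix_u.
Qed.

Lemma fixes_mono X Y M : Y *m X = X -> X *m Y = X -> fixes X M -> fixes Y M.
Proof. by move=> YX XY <-; rewrite /fixes !mulmxA YX -mulmxA XY. Qed.

Lemma fixes_sandwich X Y K M : X ^t* = X -> Y ^t* = Y ->
  Y *m K *m X = K *m X -> fixes X M -> fixes Y (K *m M *m K ^t*).
Proof.
move=> Xh Yh YKX <-; have XKY : X *m (K ^t* *m Y) = X *m K ^t*.
  by rewrite mulmxA -Xh -Yh -!adjmxM mulmxA YKX.
by rewrite /fixes !mulmxA YKX -!mulmxA XKY.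
Qed.

End Fixes.

Section Positivity.
Variable R : realType.
Local Notation C := (R[i]).

Section Linear.
Variables (n : nat) (E : 'M[C]_n -> 'M[C]_n).
Hypothesis linE : so_linear E.

Lemma so_linear0 : E 0 = 0.
Proof.
have := linE 1 0 0; rewrite !scale1r addr0 => /(congr1 (fun A => A - E 0)).
by rewrite subrr addrK.
Qed.

Lemma so_linearD A B : E (A + B) = E A + E B.
Proof. by have := linE 1 A B; rewrite !scale1r. Qed.

Lemma so_linearZ c A : E (c *: A) = c *: E A.
Proof. by rewrite -[c *: A]addr0 linE so_linear0 addr0. Qed.

End Linear.

Section QuadraticForm.
Variables (n : nat) (B : 'M[C]_n).

Definition qform (u w : 'cV[C]_n) := (u ^t* *m B *m w) 0 0.

Lemma qformDl u1 u2 w : qform (u1 + u2) w = qform u1 w + qform u2 w.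
Proof. by rewrite /qform linearD /= map_mxD !mulmxDl mxE. Qed.

Lemma qformDr u w1 w2 : qform u (w1 + w2) = qform u w1 + qform u w2.
Proof. by rewrite /qform mulmxDr mxE. Qed.

Lemma qformZl c u w : qform (c *: u) w = c^* * qform u w.
Proof. by rewrite /qform linearZ /= map_mxZ -!scalemxAl mxE. Qed.

Lemma qformZr c u w : qform u (c *: w) = c * qform u w.
Proof. by rewrite /qform -scalemxAr mxE. Qed.

Lemma qform_delta a b : qform (delta_mx a 0) (delta_mx b 0) = B a b.
Proof.
rewrite /qform; have -> : (delta_mx a 0 : 'cV[C]_n) ^t* = delta_mx 0 a.
  by apply/matrixP=> i j; rewrite !mxE conjC_nat andbC.
by rewrite -rowE -colE !mxE.
Qed.

Lemma qform_diag_eq0 : (forall v, qform v v = 0) -> B = 0.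
Proof.
move=> diag0; apply/matrixP => a b; rewrite mxE.
have [Baa Bbb] : B a a = 0 /\ B b b = 0 by rewrite -!qform_delta !diag0.
have := diag0 (delta_mx a 0 + 'i *: delta_mx b 0).
have := diag0 (delta_mx a 0 + delta_mx b 0).
rewrite !(qformDl, qformDr, qformZl, qformZr, qform_delta) Baa Bbb conjCi.
rewrite !mulr0 !addr0 !add0r => /eqP; rewrite addr_eq0 => /eqP ->.
rewrite mulrN mulNr -opprD => /eqP; rewrite oppr_eq0 -mulr2n -mulr_natl.
by rewrite !mulf_eq0 pnatr_eq0 (negPf (neq0Ci _)) /= => /eqP->; rewrite oppr0.
Qed.

End QuadraticForm.

Lemma psd_adj n (A : 'M[C]_n) : psd A -> A ^t* = A.
Proof.
move=> psdA; apply/eqP; rewrite -subr_eq0; apply/eqP/qform_diag_eq0 => v.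
have entryB (M N : 'M[C]_1) : (M - N) 0 0 = M 0 0 - N 0 0 by rewrite !mxE.
rewrite /qform mulmxBr mulmxBl entryB.
have -> : v ^t* *m A ^t* *m v = (v ^t* *m A *m v) ^t* by rewrite !adjmxM trmxCK mulmxA.
have -> : (v ^t* *m A *m v) ^t* 0 0 = ((v ^t* *m A *m v) 0 0)^* by rewrite !mxE.
by rewrite conj_Creal ?subrr // ger0_real.
Qed.

(* Ampliation by the one-dimensional space C^1 only relabels indices along the
   bijection 'I_n ~ 'I_1 * 'I_n, realised by the isometry K. *)
Lemma cp_psd n (E : 'M[C]_n -> 'M[C]_n) A :
  completely_positive E -> psd A -> psd (E A).
Proof.
case=> _ cpE psdA.
pose K : 'M[C]_(#|{: 'I_1 * 'I_n}|, n) := \matrix_(r, a) ((enum_val r).2 == a)%:R.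
have KT_adj : (K^T) ^t* = K by apply/matrixP=> i j; rewrite !mxE conjC_nat.
have KTK : K^T *m K = 1%:M.
  apply/matrixP=> a b; rewrite !mxE (reindex (@enum_rank _)) /=; last first.
    by apply: onW_bij; exact: enum_rank_bij.
  under eq_bigr do rewrite !mxE enum_rankK.
  rewrite -(pair_bigA _ (fun (_ : 'I_1) (y : 'I_n) => (y == a)%:R * (y == b)%:R)).
  rewrite big_ord1 (bigD1 a) //= eqxx mul1r big1 ?addr0 1?eq_sym // => y /negPf->.
  by rewrite mul0r.
have KBK (B : 'M[C]_n) : K *m B *m K^T = \matrix_(r, s) B (enum_val r).2 (enum_val s).2.
  apply/matrixP=> r s; rewrite !mxE (bigD1 (enum_val s).2) //= big1 ?addr0.
    rewrite !mxE eqxx mulr1 (bigD1 (enum_val r).2) //= big1 ?addr0 ?mxE ?eqxx ?mul1r //.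
    by move=> a /negPf ra; rewrite mxE eq_sym ra mul0r.
  by move=> b /negPf sb; rewrite !mxE eq_sym sb mulr0.
have psdKAK : psd (K *m A *m K^T).
  by move=> v; have := psdA (K^T *m v); rewrite adjmxM KT_adj !mulmxA.
have amplE : ampl E (K *m A *m K^T) = K *m E A *m K^T.
  rewrite !KBK; apply/matrixP=> r s; rewrite !mxE; congr (E _ _ _).
  by apply/matrixP=> x y; rewrite !mxE !enum_rankK.
move=> w; have := cpE 1%N _ psdKAK (K *m w); rewrite amplE adjmxM.
have -> : (K ^t*) = K^T by apply/matrixP=> i j; rewrite !mxE conjC_nat.
by rewrite !mulmxA -(mulmxA _ K^T K) KTK mulmx1 -(mulmxA _ K^T K) KTK mulmx1.
Qed.

End Positivity.

Lemma polarizationC (R : realType) (xa xb ya yb : R[i]) :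
  (xa + ya) * (xb + yb)^* - xa * xb^* - ya * yb^* +
    'i * ((xa + 'i * ya) * (xb + 'i * yb)^* - xa * xb^* - ya * yb^*)
  = 2 * (xa * yb^*).
Proof.
rewrite !rmorphD !rmorphM /= conjCi; apply/eqP; rewrite -subr_eq0.
set u := xb^*; set w := yb^*.
(* [ring] knows nothing of i^2 = -1: exhibit the difference as a multiple of 1 + i i. *)
have -> : (xa + ya) * (u + w) - xa * u - ya * w +
   'i * ((xa + 'i * ya) * (u + - 'i * w) - xa * u - ya * w) - 2 * (xa * w)
   = (1 + 'i * 'i) * (ya * u - xa * w - 'i * ya * w) by ring.
by rewrite mulCii subrr mul0r.
Qed.

Lemma polarization_outer (R : realType) n (x y : 'cV[R[i]]_n) :
  (x + y) *m (x + y) ^t* - x *m x ^t* - y *m y ^t* +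
    'i *: ((x + 'i *: y) *m (x + 'i *: y) ^t* - x *m x ^t* - y *m y ^t*)
  = 2 *: (x *m y ^t*).
Proof.
apply/matrixP=> i j; rewrite !mxE !big_ord1 !mxE.
exact: polarizationC.
Qed.

Section SpecificationSemantics.
Variables (R : realType) (n : nat).
Local Notation C := (R[i]).
Variables (E : 'M[C]_n -> 'M[C]_n) (X Y : 'M[C]_n).
Hypotheses (projX : is_proj X) (projY : is_proj Y) (cpE : completely_positive E).
Hypothesis specE : forall rho, pdo rho -> sat rho X -> sat (E rho) Y.

Let linE : so_linear E := cpE.1.

Lemma fixes_spec_outer_self (z : 'cV[C]_n) : X *m z = z -> fixes Y (E (z *m z ^t*)).
Proof.
move=> Xz; have [[XX _] [YY Yh]] := (is_projP _ projX, is_projP _ projY).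
set T := \tr (z *m z ^t*).
have T_ge0 : 0 <= T.
  rewrite /T /mxtrace; apply: sumr_ge0 => i _.
  by rewrite !mxE big_ord1 !mxE; apply: mul_conjC_ge0.
have T1_gt0 : 0 < 1 + T by apply: (lt_le_trans ltr01); rewrite lerDl.
pose c := (1 + T)^-1; have c_gt0 : 0 < c by rewrite invr_gt0.
(* Rescaled, z z^* becomes a partial density operator, to which specE applies. *)
pose rho := c *: (z *m z ^t*).
have psd_rho : psd rho.
  move=> v; have -> : v ^t* *m rho *m v = c *: ((v ^t* *m z) *m (v ^t* *m z) ^t*).
    by rewrite -scalemxAr -scalemxAl !adjmxM trmxCK !mulmxA.
  rewrite mxE mulr_ge0 ?(ltW c_gt0) // !mxE big_ord1 !mxE; exact: mul_conjC_ge0.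
have tr_rho : \tr rho <= 1.
  by rewrite mxtraceZ -/T mulrC ler_pdivrMr // mul1r lerDr ler01.
have sat_rho : sat rho X by rewrite /sat sub_colspE // -scalemxAr mulmxA Xz.
have /eqP YE : Y *m E rho == E rho.
  by rewrite -sub_colspE //; apply: specE.
have EY : E rho *m Y = E rho.
  have Eh : (E rho) ^t* = E rho by apply/psd_adj/cp_psd.
  by rewrite -Eh -{1}Yh -adjmxM YE.
have : fixes Y (E rho) by rewrite /fixes YE EY.
by rewrite /fixes so_linearZ // -scalemxAr -scalemxAl => /scalerI; apply; rewrite gt_eqF.
Qed.

Lemma fixes_specD A B : fixes Y (E A) -> fixes Y (E B) -> fixes Y (E (A + B)).
Proof. by rewrite so_linearD //; apply: fixesD. Qed.

Lemma fixes_specZ c A : fixes Y (E A) -> fixes Y (E (c *: A)).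
Proof. by rewrite so_linearZ //; apply: fixesZ. Qed.

Lemma fixes_spec_outer (x y : 'cV[C]_n) :
  X *m x = x -> X *m y = y -> fixes Y (E (x *m y ^t*)).
Proof.
move=> Xx Xy.
have fixN (u : 'cV[C]_n) : X *m u = u -> fixes Y (E (- (u *m u ^t*))).
  by move=> Xu; have := fixes_specZ (-1) (fixes_spec_outer_self Xu); rewrite scaleN1r.
have Xxy : X *m (x + y) = x + y by rewrite mulmxDr Xx Xy.
have Xxiy : X *m (x + 'i *: y) = x + 'i *: y by rewrite mulmxDr -scalemxAr Xx Xy.
have re_part := fixes_specD (fixes_specD (fixes_spec_outer_self Xxy) (fixN _ Xx)) (fixN _ Xy).
have im_part := fixes_specD (fixes_specD (fixes_spec_outer_self Xxiy) (fixN _ Xx)) (fixN _ Xy).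
have := fixes_specD re_part (fixes_specZ 'i im_part).
rewrite polarization_outer => /(fixes_specZ 2^-1).
by rewrite scalerA mulVf ?scale1r ?pnatr_eq0.
Qed.

Lemma fixes_spec M : fixes X M -> fixes Y (E M).
Proof.
have [XX Xh] := is_projP _ projX.
move=> <-; rewrite [M in X *m M](matrix_sum_delta M) mulmx_sumr mulmx_suml.
apply: (big_ind (fun A => fixes Y (E A))) => [||a _].
- by rewrite so_linear0 //; apply: fixes0.
- exact: fixes_specD.
rewrite mulmx_sumr mulmx_suml.
apply: (big_ind (fun A => fixes Y (E A))) => [||b _].
- by rewrite so_linear0 //; apply: fixes0.
- exact: fixes_specD.
rewrite -scalemxAr -scalemxAl; apply: fixes_specZ.
have eb : (delta_mx b 0 : 'cV[C]_n) ^t* = delta_mx 0 b.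
  by apply/matrixP=> i j; rewrite !mxE conjC_nat andbC.
have -> : X *m delta_mx a b *m X =
    (X *m (delta_mx a 0 : 'cV[C]_n)) *m (X *m (delta_mx b 0 : 'cV[C]_n)) ^t*.
  by rewrite adjmxM Xh eb mulmxA -(mulmxA X (delta_mx a 0)) mul_delta_mx.
by apply: fixes_spec_outer; rewrite mulmxA XX.
Qed.

End SpecificationSemantics.

(** * Initialisation and unitaries *)

Section ProjectorFacts.
Variables (R : realType) (n : nat).
Local Notation C := (R[i]).
Implicit Types A P U : 'M[C]_n.

Lemma fixes_of_sat A rho : is_proj A -> psd rho -> sat rho A -> fixes A rho.
Proof.
case/is_projP=> AA Ah psd_rho; rewrite /sat sub_colspE // => /eqP A_rho.
have rho_h := psd_adj psd_rho.
have rho_A : rho *m A = rho by rewrite -rho_h -Ah -adjmxM A_rho.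
by rewrite /fixes A_rho rho_A.
Qed.

Lemma sat_of_fixes A M : is_proj A -> fixes A M -> sat M A.
Proof.
case/is_projP=> AA _ <-; rewrite /sat sub_colspE //.
by rewrite !mulmxA AA.
Qed.

Lemma proj_diag P a : is_proj P -> P a a = \sum_r P r a * (P r a)^*.
Proof.
case/is_projP=> PP Ph; rewrite -{1}PP -{1}Ph mxE.
by apply: eq_bigr => r _; rewrite !mxE mulrC.
Qed.

Lemma proj_tr_eq0 P : is_proj P -> \tr P = 0 -> P = 0.
Proof.
move=> projP_ tr0; apply/matrixP=> r a; rewrite mxE.
have col0 : \sum_c P c a * (P c a)^* = 0.
  move: tr0; rewrite /mxtrace (eq_bigr _ (fun b _ => proj_diag b projP_)).
  by move/psumr_eq0P; apply=> // b _; apply: sumr_ge0 => c _; apply: mul_conjC_ge0.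
apply/eqP; rewrite -mul_conjC_eq0; apply/eqP.
by apply: (psumr_eq0P (fun c _ => mul_conjC_ge0 (P c a)) col0).
Qed.

Lemma proj_mul_delta P a (i : 'I_n) : is_proj P -> P a a = 1 ->
  P *m delta_mx a i = delta_mx a i.
Proof.
move=> projP_ Paa; have col_a r : r != a -> P r a = 0.
  move=> ra; have := proj_diag a projP_; rewrite Paa (bigD1 a) //= Paa conjC1 mul1r.
  move/eqP; rewrite eq_sym -subr_eq0 addrAC subrr add0r => /eqP sum0.
  apply/eqP; rewrite -mul_conjC_eq0; apply/eqP.
  by apply: (psumr_eq0P (fun c _ => mul_conjC_ge0 (P c a)) sum0).
rewrite -(mul_delta_mx (0 : 'I_1)) mulmxA -colE.
congr (_ *m _); apply/matrixP=> r z; rewrite !mxE (ord1 z) eqxx andbT.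
by case: (eqVneq r a) => [->|/col_a ->]; rewrite ?Paa.
Qed.

Lemma is_proj_unitary_conj U P : U \is unitarymx -> is_proj P ->
  is_proj (U *m P *m U ^t*).
Proof.
move=> /unitarymxP UU /is_projP[PP Ph]; apply/is_projP; split.
  by rewrite -!mulmxA (mulmxA (U ^t*) U) (mulmx1C UU) mul1mx (mulmxA P P) PP.
by rewrite !adjmxM trmxCK Ph mulmxA.
Qed.

End ProjectorFacts.

Section Invariant.
Variables (R : realType) (V : finType) (k : nat) (q : reg V k).
Implicit Types X Y Z P : proj R k.

Definition maps_range X (K : lop R k) Y := val Y *m K *m val X = K *m val X.

Lemma fixes_ext_sandwich X Y K M : maps_range X K Y ->
  fixes (ext q (val X)) M -> fixes (ext q (val Y)) (ext q K *m M *m ext q (K ^t*)).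
Proof.
move=> KXY; rewrite -ext_adj; apply: fixes_sandwich; rewrite ?ext_adj ?proj_adj //.
by rewrite !ext_mul KXY.
Qed.

Lemma fixes_ext_mono X Y M : psub X Y ->
  fixes (ext q (val X)) M -> fixes (ext q (val Y)) M.
Proof.
move=> XY; apply: fixes_mono; rewrite ext_mul ?(psub_mulr XY) //.
by move/psubP: XY => ->.
Qed.

Lemma fixes_ext_ptop Y M : psub (ptop R k) Y -> fixes (ext q (val Y)) M.
Proof. by move/ptop_psub->; rewrite /fixes ext1 mul1mx mulmx1. Qed.

Lemma fixes_ext_pbot X M : psub X (pbot R k) -> fixes (ext q (val X)) M -> M = 0.
Proof. by rewrite psub_pbotE => /eqP-> <-; rewrite ext0 mulmx0. Qed.

Lemma maps_range_sasaki P X Y : psub (sasaki_conj P X) Y -> maps_range X (val P) Y.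
Proof. by move/sasaki_conj_fixed; rewrite /maps_range mulmxA. Qed.

Lemma maps_range_pbot X K Y : psub X (pbot R k) -> maps_range X K Y.
Proof. by rewrite psub_pbotE /maps_range => /eqP->; rewrite !mulmx0. Qed.

Lemma maps_range_fixed X K Y : val Y *m K = K -> maps_range X K Y.
Proof. by rewrite /maps_range => ->. Qed.

Lemma wp_init_eq0 Y : val Y (ix0 k) (ix0 k) != 1 -> val (wp_init Y) = 0.
Proof.
move=> Y00; rewrite /wp_init /ext_empty /eig1 /bra0ket0.
set c := val Y (ix0 k) (ix0 k).
have eig0 : eigenspace (c%:M : lop R 0)^T 1 = 0.
  apply/eqP; rewrite kermx_eq0 row_free_unit unitmxE tr_scalar_mx.
  have -> : (c%:M : lop R 0) - 1%:M = (c - 1)%:M.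
    by apply/matrixP=> x y; rewrite !mxE mulrnBl.
  by rewrite det_scalar unitfE expf_neq0 // subr_eq0.
have -> : val (proj_of (eigenspace (c%:M : lop R 0)^T 1)) = 0.
  apply: proj_eq_colsp; [exact: projP | exact: is_proj0 |].
  by have /eqmxP := range_proj_of (eigenspace (c%:M : lop R 0)^T 1); rewrite eig0 /colsp trmx0.
by rewrite mxE scale0r val_asproj // is_proj0.
Qed.

Lemma sp_init_delta X : \tr (val X) != 0 ->
  val (sp_init X) = delta_mx (ix0 k) (ix0 k).
Proof.
move=> trX; rewrite /sp_init /ket0bra0_tensor /supp /ptrace_all.
have -> : val (proj_of (colsp ((\tr (val X))%:M : lop R 0))) = 1%:M.
  apply: proj_eq_colsp; [exact: projP | exact: is_proj1 |].
  apply/eqmxP/(eqmx_trans (range_proj_of _)).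
  by rewrite /colsp tr_scalar_mx trmx1 -[(\tr (val X))%:M]scalemx1; apply: eqmx_scale.
by rewrite mxE eqxx mulr1n scale1r val_asproj // is_proj_delta.
Qed.

Lemma maps_range_init_wp X Y Y' i : psub X (wp_init Y') -> psub Y' Y ->
  maps_range X (delta_mx (ix0 k) i) Y.
Proof.
have [Y'00|Y'00] := eqVneq (val Y' (ix0 k) (ix0 k)) 1.
  move=> _ /psubP Y'Y; apply: maps_range_fixed.
  by rewrite -(proj_mul_delta i (projP Y') Y'00) mulmxA Y'Y.
move=> /psubP; rewrite wp_init_eq0 // mul0mx => X0 _.
by apply: maps_range_pbot; rewrite psub_pbotE -X0.
Qed.

Lemma maps_range_init_sp X X' Y i : psub X X' -> psub (sp_init X') Y ->
  maps_range X (delta_mx (ix0 k) i) Y.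
Proof.
have [trX'|trX'] := eqVneq (\tr (val X')) 0.
  move=> /psubP; rewrite (proj_tr_eq0 (projP X') trX') mul0mx => X0 _.
  by apply: maps_range_pbot; rewrite psub_pbotE -X0.
move=> _ /psubP; rewrite sp_init_delta // => Y00; apply: maps_range_fixed.
by rewrite -(mul_delta_mx (ix0 k)) mulmxA Y00.
Qed.

Lemma maps_range_unit_wp X Y Y' (U : unitary R k) :
  psub X (asproj ((val U) ^t* *m val Y' *m val U)) -> psub Y' Y ->
  maps_range X (val U) Y.
Proof.
have UU : val U *m (val U) ^t* = 1%:M by apply/unitarymxP/(svalP U).
have projW : is_proj ((val U) ^t* *m val Y' *m val U).
  have := @is_proj_unitary_conj _ _ ((val U) ^t*) (val Y').
  by rewrite trmxCK trmxC_unitary; apply; [exact: (svalP U) | exact: projP].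
move=> /psubP; rewrite val_asproj // => WX /psubP YY'.
have UX : val U *m val X = val Y' *m (val U *m val X).
  by rewrite -{1}WX !mulmxA UU mul1mx.
by rewrite /maps_range -mulmxA UX mulmxA YY'.
Qed.

Lemma maps_range_unit_sp X X' Y (U : unitary R k) :
  psub X X' -> psub (asproj (val U *m val X' *m (val U) ^t*)) Y ->
  maps_range X (val U) Y.
Proof.
have /unitarymxP UU := svalP U.
have projW := is_proj_unitary_conj (svalP U) (projP X').
move=> /psubP X'X /psubP; rewrite val_asproj // => YW.
have UX : val U *m val X = val U *m val X' *m (val U) ^t* *m (val U *m val X).
  by rewrite -{1}X'X !mulmxA -(mulmxA _ ((val U) ^t*) (val U)) (mulmx1C UU) mulmx1.
by rewrite /maps_range -mulmxA UX mulmxA YW.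
Qed.

End Invariant.

(** * Proof outlines *)

Lemma den_zero (R : realType) (V : finType) (S : prog R V) E : den S E -> E 0 = 0.
Proof.
elim: S E => /=.
- by move=> E ->.
- by move=> E ->.
- by move=> k q E ->; rewrite big1 // => i _; rewrite mulmx0 mul0mx.
- by move=> k q U E ->; rewrite mulmx0 mul0mx.
- by move=> k q P E ->; rewrite mulmx0 mul0mx.
- move=> k q P Q E [E0 [cpE0 _ _ ->]].
  by apply: (@blk_inj _ _ _ q) => s u; rewrite blk_ext_so !blk0 so_linear0 //; case: cpE0.
- move=> S0 IH0 S1 IH1 p E [E0 [E1 [/IH0 E00 /IH1 E10 ->]]].
  by rewrite E00 E10 !scaler0 addr0.
- by move=> S0 IH0 S1 IH1 E [E0 [E1 [/IH0 E00 /IH1 E10 ->]]]; rewrite E00 E10.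
- move=> k q P S1 IH1 S0 IH0 E [E1 [E0 [/IH1 E10 /IH0 E00 ->]]].
  by rewrite !mulmx0 !mul0mx E10 E00 addr0.
- move=> k q P Sb IH E [Es [denEs cvgE]].
  have pref0 m : while_pref (fun M => ext q (val P) *m M *m ext q (val P)) Es m 0 = 0.
    by elim: m => //= m ->; rewrite mulmx0 mul0mx (IH _ (denEs m)).
  apply/esym/(mx_cvg_uniq (mx_cvg_const 0))/(eq_mx_cvg _ (cvgE 0)) => N.
  by rewrite big1 // => m _; rewrite pref0 mulmx0 mul0mx.
Qed.

Section Outline.
Variables (R : realType) (V : finType) (k : nat) (q : reg V k).
Implicit Types X Y Z P Q : proj R k.

(* Derivations of {X} S {Y} in a Hoare logic whose assertions live on q. *)
Inductive outline : proj R k -> proj R k -> prog R V -> Prop :=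
| ol_top X Y S : psub (ptop R k) Y -> outline X Y S
| ol_bot X Y S : psub X (pbot R k) -> outline X Y S
| ol_spec X Y P Q : psub X P -> psub Q Y -> outline X Y (PSpec q P Q)
| ol_skip X Y : psub X Y -> outline X Y (PSkip R V)
| ol_abort X Y : outline X Y (PAbort R V)
| ol_init X Y : (forall i, maps_range X (delta_mx (ix0 k) i) Y) ->
    outline X Y (PInit R q)
| ol_unit X Y U : maps_range X (val U) Y -> outline X Y (PUnit q U)
| ol_assert X Y P : psub (sasaki_conj P X) Y -> outline X Y (PAssert q P)
| ol_seq X Y Z S0 S1 : outline X Z S0 -> outline Z Y S1 -> outline X Y (PSeq S0 S1)
| ol_choice X Y S0 S1 p : outline X Y S0 -> outline X Y S1 ->
    outline X Y (PChoice S0 S1 p)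
| ol_if X Y P X1 X0 S1 S0 : psub (sasaki_conj P X) X1 ->
    psub (sasaki_conj (pperp P) X) X0 -> outline X1 Y S1 -> outline X0 Y S0 ->
    outline X Y (PIf q P S1 S0)
| ol_while X Y P I X' Sb : psub X I -> psub (sasaki_conj P I) X' ->
    psub (sasaki_conj (pperp P) I) Y -> outline X' I Sb ->
    outline X Y (PWhile q P Sb).

Lemma fixes_ext_sasaki P X Y M : psub (sasaki_conj P X) Y ->
  fixes (ext q (val X)) M ->
  fixes (ext q (val Y)) (ext q (val P) *m M *m ext q (val P)).
Proof.
by move/maps_range_sasaki/fixes_ext_sandwich => /[apply]; rewrite proj_adj.
Qed.

Lemma outline_sound X Y S E rho : outline X Y S -> den S E ->
  fixes (ext q (val X)) rho -> fixes (ext q (val Y)) (E rho).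
Proof.
move=> ol; elim: ol E rho => {X Y S}.
- by move=> X Y S top E rho _ _; apply: fixes_ext_ptop.
- by move=> X Y S /fixes_ext_pbot bot E rho /den_zero E0 /bot->; rewrite E0; apply: fixes0.
- move=> X Y P Q XP QY E rho [E' [cpE' _ specE' ->]] /(fixes_ext_mono XP) fixP.
  apply: fixes_ext_mono QY _; apply: (@blk_inj _ _ _ q) => s u.
  rewrite blk_sandwich blk_ext_so; apply: (fixes_spec (projP P) (projP Q) cpE' specE').
  by rewrite /fixes -blk_sandwich fixP.
- by move=> X Y XY E rho /= -> /(fixes_ext_mono XY).
- by move=> X Y E rho /= -> _; apply: fixes0.
- move=> X Y init E rho /= -> fixX; apply: fixes_sum => i.
  have -> : delta_mx i (ix0 k) = (delta_mx (ix0 k) i : lop R k) ^t*.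
    by apply/matrixP=> a b; rewrite !mxE conjC_nat andbC.
  exact: fixes_ext_sandwich (init i) fixX.
- by move=> X Y U unit E rho /= -> /(fixes_ext_sandwich unit); rewrite ext_adj.
- by move=> X Y P conj E rho /= -> /(fixes_ext_sasaki conj).
- move=> X Y Z S0 S1 _ IH0 _ IH1 E rho /= [E0 [E1 [den0 den1 ->]]] fixX.
  exact: IH1 den1 (IH0 _ _ den0 fixX).
- move=> X Y S0 S1 p _ IH0 _ IH1 E rho /= [E0 [E1 [den0 den1 ->]]] fixX.
  by apply: fixesD; apply: fixesZ; [exact: IH0 | exact: IH1].
- move=> X Y P X1 X0 S1 S0 conj1 conj0 _ IH1 _ IH0 E rho /= [E1 [E0 [den1 den0 ->]]] fixX.
  apply: fixesD; [apply: IH1 den1 _ | apply: IH0 den0 _]; exact: fixes_ext_sasaki fixX.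
- move=> X Y P I X' Sb XI conjI conj0 _ IH E rho /= [Es [denEs cvgE]] fixX.
  have inv m : fixes (ext q (val I))
      (while_pref (fun M => ext q (val P) *m M *m ext q (val P)) Es m rho).
    elim: m => [|m IHm] /=; first exact: fixes_ext_mono XI fixX.
    exact: IH _ _ (denEs m) (fixes_ext_sasaki conjI IHm).
  apply: fixes_lim (cvgE rho) _ => N; apply: fixes_sum => m.
  exact: fixes_ext_sasaki conj0 (inv m).
Qed.

End Outline.

(** * Admissibility of the refinement rules *)

(* The register of a [PSpec] has a type indexed by its length, so inversion
   leaves dependent equalities; decidability of [nat] removes them. *)
Ltac inv H := inversion H; subst; repeat match goal with
  | h : existT _ _ _ = existT _ _ _ |- _ =>
      apply inj_pair2_eq_dec in h; [subst | exact Nat.eq_dec] end.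

Ltac ol_trivial := solve [apply: ol_top; assumption | apply: ol_bot; assumption].

Section RuleAdmissibility.
Variables (R : realType) (V : finType) (k : nat) (q : reg V k).
Implicit Types X Y P Q : proj R k.
Local Notation outline := (@outline R V k q).
Local Notation spec := (@PSpec R V k q).

Lemma outline_specE X Y P Q : outline X Y (spec P Q) ->
  [\/ psub (ptop R k) Y, psub X (pbot R k) | psub X P /\ psub Q Y].
Proof. by move=> ol; inv ol; [apply: Or31 | apply: Or32 | apply: Or33]. Qed.

Lemma outline_specW X Y P Q S : outline X Y (spec P Q) ->
  (psub X P -> psub Q Y -> outline X Y S) -> outline X Y S.
Proof. by case/outline_specE=> [/ol_top|/ol_bot|[XP QY]] //; apply. Qed.

Lemma outline_c_skip X Y P : outline X Y (spec P P) -> outline X Y (PSkip R V).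
Proof. by move/outline_specW; apply=> XP PY; apply/ol_skip/(psub_trans XP). Qed.

Lemma outline_c_cons X Y P Q P' Q' : psub P P' -> psub Q' Q ->
  outline X Y (spec P Q) -> outline X Y (spec P' Q').
Proof.
move=> PP' Q'Q /outline_specW; apply=> XP QY.
by apply: ol_spec; [exact: psub_trans XP PP' | exact: psub_trans Q'Q QY].
Qed.

Lemma outline_c_seq X Y P Q Z : outline X Y (spec P Q) ->
  outline X Y (PSeq (spec P Z) (spec Z Q)).
Proof.
move/outline_specW; apply=> XP QY.
by apply: ol_seq; [apply: ol_spec XP (psub_refl _) | apply: ol_spec (psub_refl _) QY].
Qed.

Lemma outline_w_init X Y Q : outline X Y (spec (wp_init Q) Q) -> outline X Y (PInit R q).
Proof.
by move/outline_specW; apply=> XW QY; apply: ol_init => i; apply: maps_range_init_wp XW QY.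
Qed.

Lemma outline_s_init X Y P : outline X Y (spec P (sp_init P)) -> outline X Y (PInit R q).
Proof.
by move/outline_specW; apply=> XP spY; apply: ol_init => i; apply: maps_range_init_sp XP spY.
Qed.

Lemma outline_w_unit X Y (U : unitary R k) Q :
  outline X Y (spec (asproj ((val U) ^t* *m val Q *m val U)) Q) ->
  outline X Y (PUnit q U).
Proof. by move/outline_specW; apply=> XW QY; apply/ol_unit/(maps_range_unit_wp XW QY). Qed.

Lemma outline_s_unit X Y (U : unitary R k) P :
  outline X Y (spec P (asproj (val U *m val P *m (val U) ^t*))) ->
  outline X Y (PUnit q U).
Proof. by move/outline_specW; apply=> XP UY; apply/ol_unit/(maps_range_unit_sp XP UY). Qed.

Lemma outline_w_assert X Y P Q :
  outline X Y (spec (sasaki_imp P Q) Q) -> outline X Y (PAssert q P).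
Proof.
move/outline_specW; apply=> Ximp QY.
by apply/ol_assert/(psub_trans _ QY); rewrite sasaki_adjunction.
Qed.

Lemma outline_s_assert X Y P Q :
  outline X Y (spec P (sasaki_conj Q P)) -> outline X Y (PAssert q Q).
Proof.
move/outline_specW; apply=> XP conjY.
exact/ol_assert/(psub_trans (sasaki_conjS _ XP) conjY).
Qed.

Lemma outline_w_choice X Y P1 P2 Q p : outline X Y (spec (pmeet P1 P2) Q) ->
  outline X Y (PChoice (spec P1 Q) (spec P2 Q) p).
Proof.
move/outline_specW; apply; rewrite psub_pmeet => /andP[XP1 XP2] QY.
by apply: ol_choice; apply: ol_spec.
Qed.

Lemma outline_s_choice X Y P Q1 Q2 p : outline X Y (spec P (pjoin Q1 Q2)) ->
  outline X Y (PChoice (spec P Q1) (spec P Q2) p).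
Proof.
move/outline_specW; apply=> XP; rewrite pjoin_psub => /andP[Q1Y Q2Y].
by apply: ol_choice; apply: ol_spec.
Qed.

Lemma outline_w_if X Y P P1 P0 Q :
  outline X Y (spec (pmeet (sasaki_imp P P1) (sasaki_imp (pperp P) P0)) Q) ->
  outline X Y (PIf q P (spec P1 Q) (spec P0 Q)).
Proof.
move/outline_specW; apply; rewrite psub_pmeet -!sasaki_adjunction => /andP[c1 c0] QY.
by apply: ol_if c1 c0 _ _; apply: ol_spec (psub_refl _) QY.
Qed.

Lemma outline_w_if_spec X Y P P1 P0 X1 X0 Q :
  psub (sasaki_conj P X) X1 -> psub (sasaki_conj (pperp P) X) X0 ->
  outline X1 Y (spec P1 Q) -> outline X0 Y (spec P0 Q) ->
  outline X Y (spec (pmeet (sasaki_imp P P1) (sasaki_imp (pperp P) P0)) Q).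
Proof.
have below_bot Z : psub Z (pbot R k) -> forall W, psub Z W.
  by move=> Zbot W; apply: psub_trans Zbot (pbot_psub W).
move=> conj1 conj0 ol1 ol0.
case/outline_specE: ol1 => [top|bot1|[X1P1 QY]]; first exact: ol_top top.
- case/outline_specE: ol0 => [top|bot0|[X0P0 QY]]; first exact: ol_top top.
    apply: ol_bot; rewrite psub_pbotE; apply/eqP/sasaki_conj_pbot.
      exact: psub_trans conj1 bot1.
    exact: psub_trans conj0 bot0.
  apply: ol_spec QY; rewrite psub_pmeet -!sasaki_adjunction.
  by rewrite (psub_trans conj1 (below_bot _ bot1 _)) (psub_trans conj0 X0P0).
- case/outline_specE: ol0 => [top|bot0|[X0P0 _]]; first exact: ol_top top.
  all: apply: ol_spec QY; rewrite psub_pmeet -!sasaki_adjunction.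
  + by rewrite (psub_trans conj1 X1P1) (psub_trans conj0 (below_bot _ bot0 _)).
  + by rewrite (psub_trans conj1 X1P1) (psub_trans conj0 X0P0).
Qed.

Lemma outline_s_if X Y P Q R0 : outline X Y (spec P Q) ->
  outline X Y (PIf q R0 (spec (sasaki_conj R0 P) Q) (spec (sasaki_conj (pperp R0) P) Q)).
Proof.
move/outline_specW; apply=> XP QY.
by apply: ol_if (sasaki_conjS _ XP) (sasaki_conjS _ XP) _ _; apply: ol_spec (psub_refl _) QY.
Qed.

Lemma outline_w_while X Y P Q R0 (J := pmeet (sasaki_imp P Q) (sasaki_imp (pperp P) R0)) :
  outline X Y (spec J R0) -> outline X Y (PWhile q P (spec Q J)).
Proof.
move/outline_specW; apply=> XJ RY.
have /andP[JQ JR] : psub J (sasaki_imp P Q) && psub J (sasaki_imp (pperp P) R0).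
  by rewrite -psub_pmeet psub_refl.
apply: ol_while XJ _ _ _; last by apply: ol_spec; apply: psub_refl.
  by rewrite sasaki_adjunction.
by apply: psub_trans RY; rewrite sasaki_adjunction.
Qed.

Lemma outline_s_while X Y P I : outline X Y (spec I (sasaki_conj (pperp P) I)) ->
  outline X Y (PWhile q P (spec (sasaki_conj P I) I)).
Proof.
move/outline_specW; apply=> XI conjY.
by apply: ol_while XI (psub_refl _) conjY _; apply: ol_spec; apply: psub_refl.
Qed.

End RuleAdmissibility.

Section ChoiceAdmissibility.
Variables (R : realType) (V : finType) (k : nat) (q : reg V k).
Variables (k' : nat) (q' : reg V k').
Implicit Types (X Y : proj R k) (P Q : proj R k').

Lemma outline_w_choice_spec X Y P1 P2 Q : outline q X Y (PSpec q' P1 Q) ->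
  outline q X Y (PSpec q' P2 Q) -> outline q X Y (PSpec q' (pmeet P1 P2) Q).
Proof.
move=> ol1 ol2; inv ol1; try ol_trivial; inv ol2; try ol_trivial.
by apply: ol_spec; rewrite // psub_pmeet; apply/andP.
Qed.

Lemma outline_s_choice_spec X Y P Q1 Q2 : outline q X Y (PSpec q' P Q1) ->
  outline q X Y (PSpec q' P Q2) -> outline q X Y (PSpec q' P (pjoin Q1 Q2)).
Proof.
move=> ol1 ol2; inv ol1; try ol_trivial; inv ol2; try ol_trivial.
by apply: ol_spec; rewrite // pjoin_psub; apply/andP.
Qed.

End ChoiceAdmissibility.

Lemma outline_derives (R : realType) (V : finType) k (q : reg V k) L (S0 S1 : prog R V) :
  derives L S0 S1 -> forall X Y, outline q X Y S0 -> outline q X Y S1.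
Proof.
elim=> {L S0 S1}; try by [].
- by move=> L S0 S1 S2 _ IH1 _ IH2 X Y /IH1 /IH2.
- move=> L S0 S1 T0 T1 _ IH0 _ IH1 X Y ol; inv ol; try ol_trivial.
  by apply: ol_seq; [apply: IH0; eassumption | apply: IH1].
- move=> L S0 S1 T0 T1 p _ IH0 _ IH1 X Y ol; inv ol; try ol_trivial.
  by apply: ol_choice; [apply: IH0 | apply: IH1].
- move=> L k' q' P S0 S1 T0 T1 _ IH0 _ IH1 X Y ol; inv ol; try ol_trivial.
  by apply: ol_if; [eassumption | eassumption | apply: IH1 | apply: IH0].
- move=> L k' q' P Sb T _ IH X Y ol; inv ol; try ol_trivial.
  by apply: ol_while; [eassumption | eassumption | eassumption | apply: IH].
- by move=> L k' q' Q S X Y ol; inv ol; try ol_trivial.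
- by move=> L k' q' P S X Y ol; inv ol; try ol_trivial.
- by move=> *; apply: ol_abort.
- by move=> L k' q' P X Y ol; inv ol; try ol_trivial; apply: outline_c_skip ol.
- move=> L k' q' P Q P' Q' PP' Q'Q X Y ol; inv ol; try ol_trivial.
  exact: outline_c_cons ol.
- by move=> L k' q' P Q Z X Y ol; inv ol; try ol_trivial; apply: outline_c_seq ol.
- by move=> k' q' Q X Y ol; inv ol; try ol_trivial; apply: outline_w_init ol.
- by move=> k' q' U Q X Y ol; inv ol; try ol_trivial; apply: outline_w_unit ol.
- by move=> k' q' P Q X Y ol; inv ol; try ol_trivial; apply: outline_w_assert ol.
- move=> k' q' P P1 P2 Q p _ -> X Y ol; inv ol; try ol_trivial.
  exact: outline_w_choice ol.
- move=> k' q' P P1 P2 Q p _ -> X Y ol; inv ol; try ol_trivial.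
  exact: outline_w_choice_spec.
- by move=> k' q' P P1 P0 Q X Y ol; inv ol; try ol_trivial; apply: outline_w_if ol.
- move=> k' q' P P1 P0 Q X Y ol; inv ol; try ol_trivial.
  by apply: outline_w_if_spec; eassumption.
- by move=> k' q' P Q R0 X Y ol; inv ol; try ol_trivial; apply: outline_w_while ol.
- by move=> k' q' P X Y ol; inv ol; try ol_trivial; apply: outline_s_init ol.
- by move=> k' q' U P X Y ol; inv ol; try ol_trivial; apply: outline_s_unit ol.
- by move=> k' q' P Q X Y ol; inv ol; try ol_trivial; apply: outline_s_assert ol.
- move=> k' q' P Q Q1 Q2 p _ <- X Y ol; inv ol; try ol_trivial.
  exact: outline_s_choice ol.
- move=> k' q' P Q Q1 Q2 p _ <- X Y ol; inv ol; try ol_trivial.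
  exact: outline_s_choice_spec.
- by move=> k' q' P Q R0 X Y ol; inv ol; try ol_trivial; apply: outline_s_if ol.
- by move=> k' q' P I X Y ol; inv ol; try ol_trivial; apply: outline_s_while ol.
Qed.

Theorem theorem4p4 (R : realType) (V : finType) (k : nat) (q : reg V k)
    (P Q : proj R k) (S : prog R V) :
  derives Wpc (PSpec q P Q) S \/ derives Spc (PSpec q P Q) S ->
  hoare_valid (ext q (val P)) S (ext q (val Q)).
Proof.
move=> derivS rho E [psd_rho _] denE sat_rho.
have olS : outline q P Q S.
  have ol0 : outline q P Q (PSpec q P Q) by apply: ol_spec; apply: psub_refl.
  by case: derivS => /outline_derives; apply.
apply: sat_of_fixes; first exact/is_proj_ext/projP.
apply: outline_sound olS denE _.
by apply: fixes_of_sat => //; exact/is_proj_ext/projP.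
Qed.
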